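(* Let $n>2k$ be integers and let $A\in\mathscr F_k^5$ satisfy, for all $\alpha\in\mathscr I_{k-1}^5$, $$(n+2k-4\alpha_3-4)A_{\alpha+\vec e_3}=(n+2k-4\alpha_4-4)A_{\alpha+\vec e_4},$$ $$(n+2k-4\alpha_5-4)A_{\alpha+\vec e_5}=(n+2k-4\alpha_1-4)A_{\alpha+\vec e_1},$$ $$(n+2k-4\alpha_3-4)A_{\alpha+\vec e_3}=(n+2k-4\alpha_1-4)A_{\alpha+\vec e_1}-4(\alpha_1-\alpha_3-\alpha_4+\alpha_5)A_{\alpha+\vec e_2}.$$ Then for all $\alpha\in\mathscr I_k^5$: $$A_{\alpha_1,\alpha_2,\alpha_3,\alpha_4,\alpha_5}=A_{\alpha_1,\alpha_2,\alpha_4,\alpha_3,\alpha_5},\quad A_{\alpha_1,\alpha_2,\alpha_3,\alpha_4,\alpha_5}=A_{\alpha_5,\alpha_2,\alpha_3,\alpha_4,\alpha_1},\quad A_{\alpha_1,\alpha_2,\alpha_3,\alpha_4,\alpha_5}=A_{\alpha_3,\alpha_2,\alpha_1,\alpha_5,\alpha_4}.$$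
   Context: Notation: $\mathscr I_k^\ell:=\{\alpha\in\mathbb N_0^\ell:\alpha_1+\cdots+\alpha_\ell=k\}$; $\mathscr F_k^\ell$ is the real vector space of functions $A:\mathscr I_k^\ell\to\mathbb R$, $A_\alpha:=A(\alpha)$; $\vec e_j\in\mathbb N_0^\ell$ is the tuple with $1$ in slot $j$ and $0$ elsewhere. *)

From Stdlib Require Import Reals Lra Lia.
Open Scope R_scope.

(* An element A of F_k^5 is modelled as a real-valued function of the five
   coordinates alpha_1..alpha_5; only its values on tuples with
   alpha_1+...+alpha_5 = k (i.e. on I_k^5) are ever used. *)
Definition F5 := nat -> nat -> nat -> nat -> nat -> R.

Definition coef (n k a : nat) : R := INR n + 2 * INR k - 4 * INR a - 4.

From Stdlib Require Import Reals Lra Lia.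
Open Scope R_scope.

(* Rescale A by the positive weight P(a1) P(a3) P(a4) P(a5), where P(m) is the
   product of coef n k j over j < m.  The first two relations then say that the
   rescaled function B is unchanged when a unit moves from slot 3 to slot 4 or
   from slot 1 to slot 5, so B only depends on s = a1 + a5 and t = a3 + a4:
   B = G(s, t).  The third relation becomes the recurrence
   G(s, t+1) = G(s+1, t) - 4 (s - t) G(s, t).  By induction on s + t, the
   difference G(s, t) - G(t, s) satisfies the same shift invariance on each level
   s + t = m, so it is constant there; being antisymmetric, it vanishes.  All
   three symmetries of A follow, since they permute the weight factors. *)

Lemma shift_invariant {T : Type} (m : nat) (f : nat -> nat -> T) :
  (forall s t, S (s + t) = m -> f (S s) t = f s (S t)) ->
  forall s t, (s + t = m)%nat -> f s t = f 0%nat m.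
Proof.
  intros Hf s; induction s as [|s IH]; intros t Hst.
  - subst; reflexivity.
  - rewrite Hf by lia. apply IH; lia.
Qed.

Corollary shift_invariant_sym {T : Type} (m : nat) (f : nat -> nat -> T) :
  (forall s t, S (s + t) = m -> f (S s) t = f s (S t)) ->
  forall s t, (s + t = m)%nat -> f s t = f t s.
Proof.
  intros Hf s t Hst.
  rewrite (shift_invariant m f Hf s t), (shift_invariant m f Hf t s); auto; lia.
Qed.

Fixpoint coef_prod (n k m : nat) : R :=
  match m with
  | O => 1
  | S j => coef_prod n k j * coef n k j
  end.

Lemma coef_pos (n k j : nat) : (2 * k < n)%nat -> (j < k)%nat -> 0 < coef n k j.
Proof.
  intros Hn Hj; unfold coef.
  assert (INR (2 * k) < INR n) by (apply lt_INR; lia).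
  assert (INR (S j) <= INR k) by (apply le_INR; lia).
  rewrite mult_INR, S_INR in *; simpl in *; lra.
Qed.

Lemma coef_prod_pos (n k m : nat) :
  (2 * k < n)%nat -> (m <= k)%nat -> 0 < coef_prod n k m.
Proof.
  intros Hn; induction m as [|m IH]; intros Hm; simpl; [lra|].
  apply Rmult_lt_0_compat; [apply IH | apply coef_pos]; lia.
Qed.

Definition weight (n k a1 a3 a4 a5 : nat) : R :=
  coef_prod n k a1 * coef_prod n k a3 * coef_prod n k a4 * coef_prod n k a5.

Lemma weight_pos (n k a1 a3 a4 a5 : nat) :
  (2 * k < n)%nat -> (a1 <= k)%nat -> (a3 <= k)%nat -> (a4 <= k)%nat ->
  (a5 <= k)%nat -> 0 < weight n k a1 a3 a4 a5.
Proof.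
  intros; unfold weight.
  repeat apply Rmult_lt_0_compat; apply coef_prod_pos; assumption.
Qed.

Section Rescaled.

Variables (n k : nat) (A : F5).

Hypothesis relations :
  forall a1 a2 a3 a4 a5 : nat, (a1 + a2 + a3 + a4 + a5 + 1 = k)%nat ->
     coef n k a3 * A a1 a2 (S a3) a4 a5 = coef n k a4 * A a1 a2 a3 (S a4) a5 /\
     coef n k a5 * A a1 a2 a3 a4 (S a5) = coef n k a1 * A (S a1) a2 a3 a4 a5 /\
     coef n k a3 * A a1 a2 (S a3) a4 a5 =
       coef n k a1 * A (S a1) a2 a3 a4 a5
       - 4 * (INR a1 - INR a3 - INR a4 + INR a5) * A a1 (S a2) a3 a4 a5.

Definition rescaled (a1 a2 a3 a4 a5 : nat) : R :=
  weight n k a1 a3 a4 a5 * A a1 a2 a3 a4 a5.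

Lemma rescaled_shift34 (a1 a2 a3 a4 a5 : nat) :
  (a1 + a2 + a3 + a4 + a5 + 1 = k)%nat ->
  rescaled a1 a2 (S a3) a4 a5 = rescaled a1 a2 a3 (S a4) a5.
Proof.
  intros Hs; destruct (relations a1 a2 a3 a4 a5 Hs) as [rel34 _].
  unfold rescaled, weight; simpl.
  transitivity (coef_prod n k a1 * coef_prod n k a3 * coef_prod n k a4 *
                coef_prod n k a5 * (coef n k a3 * A a1 a2 (S a3) a4 a5)); [ring|].
  rewrite rel34; ring.
Qed.

Lemma rescaled_shift15 (a1 a2 a3 a4 a5 : nat) :
  (a1 + a2 + a3 + a4 + a5 + 1 = k)%nat ->
  rescaled (S a1) a2 a3 a4 a5 = rescaled a1 a2 a3 a4 (S a5).
Proof.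
  intros Hs; destruct (relations a1 a2 a3 a4 a5 Hs) as [_ [rel51 _]].
  unfold rescaled, weight; simpl.
  transitivity (coef_prod n k a1 * coef_prod n k a3 * coef_prod n k a4 *
                coef_prod n k a5 * (coef n k a1 * A (S a1) a2 a3 a4 a5)); [ring|].
  rewrite <- rel51; ring.
Qed.

Definition reduced (s t : nat) : R := rescaled 0 (k - s - t) 0 t s.

Lemma rescaled_reduced (a1 a2 a3 a4 a5 : nat) :
  (a1 + a2 + a3 + a4 + a5 = k)%nat ->
  rescaled a1 a2 a3 a4 a5 = reduced (a1 + a5) (a3 + a4).
Proof.
  intros Hs.
  rewrite (shift_invariant (a3 + a4) (fun x y => rescaled a1 a2 x y a5))
    by first [lia | intros; apply rescaled_shift34; lia].
  rewrite (shift_invariant (a1 + a5) (fun x y => rescaled x a2 0 (a3 + a4) y))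
    by first [lia | intros; apply rescaled_shift15; lia].
  unfold reduced; f_equal; lia.
Qed.

Lemma reduced_recurrence (s t : nat) : (s + t < k)%nat ->
  reduced s (S t) = reduced (S s) t - 4 * (INR s - INR t) * reduced s t.
Proof.
  intros Hst; set (a2 := (k - s - t - 1)%nat).
  replace (reduced s (S t)) with (rescaled s a2 1 t 0)
    by (rewrite rescaled_reduced by (unfold a2; lia); f_equal; lia).
  replace (reduced (S s) t) with (rescaled (S s) a2 0 t 0)
    by (rewrite rescaled_reduced by (unfold a2; lia); f_equal; lia).
  replace (reduced s t) with (rescaled s (S a2) 0 t 0)
    by (rewrite rescaled_reduced by (unfold a2; lia); f_equal; lia).
  destruct (relations s a2 0 t 0 ltac:(unfold a2; lia)) as [_ [_ rel2]].
  unfold rescaled, weight; simpl.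
  transitivity (coef_prod n k s * coef_prod n k t *
                (coef n k 0 * A s a2 1%nat t 0%nat)); [ring|].
  rewrite rel2, INR_0; ring.
Qed.

Lemma reduced_sym (m : nat) : (m <= k)%nat ->
  forall s t, (s + t = m)%nat -> reduced s t = reduced t s.
Proof.
  induction m as [|m IH]; intros Hm s t Hst.
  - replace s with 0%nat by lia; replace t with 0%nat by lia; reflexivity.
  - assert (antisym_const :
      forall s t, (s + t = S m)%nat ->
        reduced s t - reduced t s = reduced t s - reduced s t).
    { apply (shift_invariant_sym (S m) (fun s t => reduced s t - reduced t s)).
      intros s' t' Hst'.
      rewrite (reduced_recurrence s' t'), (reduced_recurrence t' s') by lia.
      rewrite (IH ltac:(lia) s' t') by lia.
      ring. }
    specialize (antisym_const s t Hst); lra.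
Qed.

End Rescaled.

Lemma eq_of_rescaled_eq (n k : nat) (A : F5) (a1 a2 a3 a4 a5 b1 b2 b3 b4 b5 : nat) :
  (2 * k < n)%nat -> (a1 <= k)%nat -> (a3 <= k)%nat -> (a4 <= k)%nat ->
  (a5 <= k)%nat ->
  weight n k a1 a3 a4 a5 = weight n k b1 b3 b4 b5 ->
  rescaled n k A a1 a2 a3 a4 a5 = rescaled n k A b1 b2 b3 b4 b5 ->
  A a1 a2 a3 a4 a5 = A b1 b2 b3 b4 b5.
Proof.
  unfold rescaled; intros Hn H1 H3 H4 H5 Hw HB; rewrite <- Hw in HB.
  apply Rmult_eq_reg_l in HB; [assumption|].
  apply Rgt_not_eq, weight_pos; assumption.
Qed.

Theorem lemma4p1 (n k : nat) (A : F5) :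
  (2 * k < n)%nat ->
  (forall a1 a2 a3 a4 a5 : nat, (a1 + a2 + a3 + a4 + a5 + 1 = k)%nat ->
     coef n k a3 * A a1 a2 (S a3) a4 a5 = coef n k a4 * A a1 a2 a3 (S a4) a5 /\
     coef n k a5 * A a1 a2 a3 a4 (S a5) = coef n k a1 * A (S a1) a2 a3 a4 a5 /\
     coef n k a3 * A a1 a2 (S a3) a4 a5 =
       coef n k a1 * A (S a1) a2 a3 a4 a5
       - 4 * (INR a1 - INR a3 - INR a4 + INR a5) * A a1 (S a2) a3 a4 a5) ->
  forall a1 a2 a3 a4 a5 : nat, (a1 + a2 + a3 + a4 + a5 = k)%nat ->
    A a1 a2 a3 a4 a5 = A a1 a2 a4 a3 a5 /\
    A a1 a2 a3 a4 a5 = A a5 a2 a3 a4 a1 /\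
    A a1 a2 a3 a4 a5 = A a3 a2 a1 a5 a4.
Proof.
  intros Hn relations a1 a2 a3 a4 a5 Hs.
  split; [|split]; apply (eq_of_rescaled_eq n k A); try lia;
    try (unfold weight; ring);
    rewrite !(rescaled_reduced n k A relations) by lia.
  - f_equal; lia.
  - f_equal; lia.
  - apply (reduced_sym n k A relations (a1 + a5 + (a3 + a4))); lia.
Qed.
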